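(* Let $A$ be a $2$-pole with $t(A)=(a+2,\,a,\,n)$. Let $A'$ be the $2$-pole constructed from $A$ as follows: take two disjoint copies of $A$ and four new vertices $x_1,x_2,y_1,y_2$; attach one dangling edge of each copy of $A$ to $x_1$ and the other dangling edge of each copy to $x_2$; add the edges of the path $x_1y_1y_2x_2$; finally add one dangling edge at $y_1$ and one dangling edge at $y_2$ (these two are the dangling edges of $A'$). Then $t(A')=(2a+4,\,2a+2,\,2n+4)$.
   Context: An $r$-pole ($r\in\{2,3\}$) is a finite graph together with $r$ dangling edges, each dangling edge being a half-edge attached to exactly one vertex, such that every vertex has degree $3$ when dangling edges are counted (a $2$-pole arises, e.g., from a $2$-edge-connected cubic graph by cutting one edge into two dangling edges). An even factor of an $r$-pole $P$ is a set $F$ of edges and dangling edges of $P$ such that every vertex of $P$ is incident with either $0$ or $2$ elements of $F$; the number of dangling edges in $F$ is always even. Thus $F$ decomposes into disjoint circuits, isolated vertices (vertices incident with no element of $F$), and, if $F$ contains two dangling edges, one path starting and ending with a dangling edge. The excess of $F$ is $q(P,F)=2c+v$, where $c$ is the number of circuits of $F$ and $v$ is the number of isolated vertices (the path through dangling edges contributes nothing). For an $r$-pole $P$ we set $t(P)=(q_0(P),q_2(P),n(P))$, where $q_0(P)$ is the minimum of $q(P,F)$ over all even factors $F$ containing no dangling edges, $q_2(P)$ is the minimum of $q(P,F)$ over all even factors $F$ containing two dangling edges, and $n(P)$ is the number of vertices of $P$. *)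

From mathcomp Require Import all_boot.
Set Warnings "-notation-overridden".
Set Implicit Arguments. Unset Strict Implicit. Unset Printing Implicit Defensive.

(* An r-pole: a finite multigraph (parallel edges and loops allowed; a loop
   counts twice towards the degree) on vertex type pV with edge type pE,
   each edge e having endpoints (pends e).1 and (pends e).2, together with
   r dangling edges indexed by 'I_r, dangling edge d being attached to
   vertex (patt P d). *)
Record pole (r : nat) := Pole {
  pV : finType;
  pE : finType;
  pends : pE -> pV * pV;
  patt : 'I_r -> pV }.

Section Poles.
Variables (r : nat) (P : pole r).

Definition incid (F : {set pE P}) (G : {set 'I_r}) (v : pV P) : nat :=
  #|[set e in F | (pends e).1 == v]| + #|[set e in F | (pends e).2 == v]|
  + #|[set d in G | patt P d == v]|.

Definition cubic_pole : Prop := forall v : pV P, incid setT setT v = 3.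

Definition even_factor (F : {set pE P}) (G : {set 'I_r}) : Prop :=
  forall v : pV P, incid F G v = 0 \/ incid F G v = 2.

Definition adjF (F : {set pE P}) : rel (pV P) :=
  fun u w => [exists e in F, (pends e == (u, w)) || (pends e == (w, u))].

Definition compF (F : {set pE P}) (v : pV P) : {set pV P} :=
  [set w | connect (adjF F) v w].

Definition circuits (F : {set pE P}) (G : {set 'I_r}) : {set {set pV P}} :=
  [set C : {set pV P} |
     [exists v, (incid F G v == 2) && (C == compF F v)]
     && [forall d in G, patt P d \notin C]].

Definition isolated (F : {set pE P}) (G : {set 'I_r}) : {set pV P} :=
  [set v | incid F G v == 0].

Definition excess (F : {set pE P}) (G : {set 'I_r}) : nat :=
  2 * #|circuits F G| + #|isolated F G|.

Definition q0_is (k : nat) : Prop :=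
  (exists F, even_factor F set0 /\ excess F set0 = k) /\
  (forall F, even_factor F set0 -> k <= excess F set0).

Definition q2_is (k : nat) : Prop :=
  (exists F G, even_factor F G /\ #|G| = 2 /\ excess F G = k) /\
  (forall F G, even_factor F G -> #|G| = 2 -> k <= excess F G).

Definition nverts : nat := #|pV P|.

Definition t_is (q0 q2 n : nat) : Prop := [/\ q0_is q0, q2_is q2 & nverts = n].

End Poles.

(* Vertices: two copies of A, plus x1,x2,y1,y2 = ordinals 0,1,2,3 of 'I_4.
   Edges: edges of the two copies; for each copy b and dangling edge i of A
   an edge from the attachment vertex to x_(i+1) (dangling edge 0 goes to x1,
   dangling edge 1 to x2); and the three path edges x1y1, y1y2, y2x2. *)
Section Construction.
Variable A : pole 2.

Definition dV : finType := ((pV A + pV A) + 'I_4)%type.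
Definition dE : finType := ((pE A + pE A) + ((bool * 'I_2) + 'I_3))%type.

Definition vx1 : dV := inr (@Ordinal 4 0 isT).
Definition vx2 : dV := inr (@Ordinal 4 1 isT).
Definition vy1 : dV := inr (@Ordinal 4 2 isT).
Definition vy2 : dV := inr (@Ordinal 4 3 isT).

Definition copy (b : bool) (v : pV A) : dV :=
  if b then inl (inr v) else inl (inl v).

Definition xof (i : 'I_2) : dV := if val i == 0 then vx1 else vx2.

Definition pathedge (j : 'I_3) : dV * dV :=
  match val j with
  | 0 => (vx1, vy1)
  | 1 => (vy1, vy2)
  | _ => (vy2, vx2)
  end.

Definition dends (e : dE) : dV * dV :=
  match e with
  | inl (inl e0) => (copy false (pends e0).1, copy false (pends e0).2)
  | inl (inr e1) => (copy true (pends e1).1, copy true (pends e1).2)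
  | inr (inl (b, i)) => (copy b (patt A i), xof i)
  | inr (inr j) => pathedge j
  end.

Definition datt (d : 'I_2) : dV := if val d == 0 then vy1 else vy2.

Definition doubled : pole 2 := @Pole 2 dV dE dends datt.

End Construction.

(* An even factor F of A' restricts to an even factor of each copy of A whose
   dangling edges are the links of that copy lying in F, so by parity each copy
   uses both of its links or neither. Circuits and isolated vertices inside a
   copy are those of its restriction, hence
     q(A', F) = q(copy 0) + q(copy 1) + 2 c + v,
   where c counts the circuits through and v the isolated vertices among
   x1, x2, y1, y2. A copy costs at least a if it uses its links and a + 2
   otherwise, and the degree constraints at x1, x2, y1, y2 make c and v pay for
   the rest, giving 2a + 4 and 2a + 2. Both bounds are attained by gluing an
   optimal factor with dangling edges in one copy to an optimal factor without
   them in the other through the path x1 y1 y2 x2 (omitting y1 y2 when the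
   dangling edges of A' are used). *)

Set Warnings "-notation-overridden".
From mathcomp Require Import all_boot zify.
Set Implicit Arguments. Unset Strict Implicit. Unset Printing Implicit Defensive.

Lemma card_set_sum (T : finType) (p : pred T) : #|[set x | p x]| = \sum_x p x.
Proof. by rewrite -sum1dep_card big_mkcond; apply: eq_bigr => x _; case: (p x). Qed.

Lemma sum_card_fibers (T U : finType) (A : {set T}) (f : T -> U) :
  \sum_u #|[set x in A | f x == u]| = #|A|.
Proof.
rewrite -sum1_card (partition_big f predT) //=.
by apply: eq_bigr => u _; rewrite sum1dep_card.
Qed.

Lemma sum_pair (I J : finType) (f : I * J -> nat) :
  \sum_p f p = \sum_i \sum_j f (i, j).
Proof. by rewrite pair_bigA; apply: eq_bigr => -[]. Qed.

Lemma homo_connect (T T' : finType) (e : rel T) (e' : rel T') (f : T -> T') :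
  (forall x y, e x y -> e' (f x) (f y)) ->
  forall x y, connect e x y -> connect e' (f x) (f y).
Proof.
move=> hf x y /connectP[p]; elim: p x => [|z p IH] x /=; first by move=> _ ->.
by case/andP=> exz pz ly; apply: connect_trans (connect1 (hf _ _ exz)) (IH _ pz ly).
Qed.

Section EvenFactors.
Variables (r : nat) (P : pole r).
Implicit Types (F : {set pE P}) (G : {set 'I_r}).

Lemma sum_incid F G : \sum_v incid F G v = 2 * #|F| + #|G|.
Proof. by rewrite /incid !big_split /= !sum_card_fibers mul2n -addnn. Qed.

Lemma even_factor_dangling_even F G : even_factor F G -> ~~ odd #|G|.
Proof.
move=> evF; have : ~~ odd (\sum_v incid F G v).
  elim/big_ind: _ => // [m n|v _]; first by rewrite oddD => /negbTE-> /negbTE->.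
  by case: (evF v) => ->.
by rewrite sum_incid oddD oddM.
Qed.

Lemma adjF_sym F : symmetric (adjF F).
Proof.
by move=> u w; apply/existsP/existsP => -[e /andP[eF h]]; exists e; rewrite eF orbC.
Qed.

Lemma adjF_ends F e : e \in F -> adjF F (pends e).1 (pends e).2.
Proof. by move=> eF; apply/existsP; exists e; rewrite eF -surjective_pairing eqxx. Qed.

Lemma closed_adjF F (S : {set pV P}) :
  (forall e, e \in F -> ((pends e).1 \in S) = ((pends e).2 \in S)) ->
  closed (adjF F) S.
Proof.
move=> hS u w /existsP[e /andP[eF /orP[] /eqP E]]; by have := hS e eF; rewrite E.
Qed.

Lemma compF_id F v : v \in compF F v.
Proof. by rewrite inE connect0. Qed.

Lemma compF_eq F u w : w \in compF F u -> compF F u = compF F w.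
Proof.
rewrite inE => uw; apply/setP => z; rewrite !inE.
exact: (same_connect (sym_connect_sym (@adjF_sym F)) uw).
Qed.

Lemma compF_adjF F v x y :
  adjF F x y -> (x \in compF F v) = (y \in compF F v).
Proof. by rewrite !inE; apply: connect_closed; apply: sym_connect_sym; apply: adjF_sym. Qed.

Lemma compF_in_circuits F G v :
  incid F G v = 2 -> (forall d, d \in G -> patt P d \notin compF F v) ->
  compF F v \in circuits F G.
Proof.
move=> hv hG; rewrite inE; apply/andP; split.
  by apply/existsP; exists v; rewrite hv !eqxx.
by apply/forallP => d; apply/implyP; apply: hG.
Qed.

Lemma circuitsP F G C :
  C \in circuits F G ->
  exists2 v, incid F G v = 2 & C = compF F v /\ forall d, d \in G -> patt P d \notin C.
Proof.
rewrite inE => /andP[/existsP[v /andP[/eqP hv /eqP ->]] /forallP hG].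
by exists v => //; split => // d; apply/implyP.
Qed.

End EvenFactors.

Definition i0 : 'I_2 := @Ordinal 2 0 isT.
Definition i1 : 'I_2 := @Ordinal 2 1 isT.
Definition x1y1 : 'I_3 := @Ordinal 3 0 isT.
Definition y1y2 : 'I_3 := @Ordinal 3 1 isT.
Definition y2x2 : 'I_3 := @Ordinal 3 2 isT.

Lemma sum_ord2 (f : 'I_2 -> nat) : \sum_i f i = f i0 + f i1.
Proof. by rewrite !big_ord_recl big_ord0 addn0; congr (f _ + f _); apply: val_inj. Qed.

Lemma sum_ord3 (f : 'I_3 -> nat) : \sum_j f j = f x1y1 + f y1y2 + f y2x2.
Proof.
rewrite !big_ord_recl big_ord0 addn0 addnA.
by congr (f _ + f _ + f _); apply: val_inj.
Qed.

Lemma sum_ord4 (f : 'I_4 -> nat) :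
  \sum_k f k = f (@Ordinal 4 0 isT) + f (@Ordinal 4 1 isT) + f (@Ordinal 4 2 isT)
                + f (@Ordinal 4 3 isT).
Proof.
rewrite !big_ord_recl big_ord0 addn0 !addnA.
by congr (f _ + f _ + f _ + f _); apply: val_inj.
Qed.

Lemma card2_setT (G : {set 'I_2}) : #|G| = 2 -> G = setT.
Proof. by move=> cardG; apply/eqP; rewrite eqEcard subsetT cardsT card_ord cardG. Qed.

Lemma ord2P (i : 'I_2) : i = i0 \/ i = i1.
Proof. by case: i => -[|[|//]] ?; [left | right]; apply: val_inj. Qed.

Lemma ord3P (j : 'I_3) : [\/ j = x1y1, j = y1y2 | j = y2x2].
Proof. by case: j => -[|[|[|//]]] ?; [apply: Or31 | apply: Or32 | apply: Or33]; apply: val_inj. Qed.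

Section Doubled.
Variable A : pole 2.
Notation A' := (doubled A).
Implicit Types (F : {set pE A'}) (G : {set 'I_2}).

Definition copy_edge (b : bool) (e : pE A) : pE A' := inl (if b then inr e else inl e).
Definition link (b : bool) (i : 'I_2) : pE A' := inr (inl (b, i)).
Definition path_edge (j : 'I_3) : pE A' := inr (inr j).

(* The restriction of F to copy [b]; the links of copy [b] lying in F become
   its dangling edges. *)
Definition copyF F b : {set pE A} := [set e | copy_edge b e \in F].
Definition copyG F b : {set 'I_2} := [set i | link b i \in F].

Definition new_vertex (v : pV A') : bool := if v is inr _ then true else false.

Lemma new_vertexP v : new_vertex v -> [\/ v = vx1 A, v = vx2 A, v = vy1 A | v = vy2 A].
Proof.
case: v => // -[[|[|[|[|m]]]] lt_k4] _ //;
  [apply: Or41 | apply: Or42 | apply: Or43 | apply: Or44];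
  by apply: (congr1 inr); apply: val_inj.
Qed.

Lemma copy_not_new b w : ~~ new_vertex (copy b w).
Proof. by case: b. Qed.

Lemma xof_new i : new_vertex (xof A i).
Proof. by rewrite /xof; case: ifP. Qed.

Lemma datt_new i : new_vertex (datt A i).
Proof. by rewrite /datt; case: ifP. Qed.

Lemma pathedge1_new j : new_vertex (pathedge A j).1.
Proof. by case: j => -[|[|]]. Qed.

Lemma pathedge2_new j : new_vertex (pathedge A j).2.
Proof. by case: j => -[|[|]]. Qed.

Lemma doubled_vertexP v : (exists b w, v = copy b w) \/ new_vertex v.
Proof. by case: v => [[w|w]|k]; [left; exists false, w | left; exists true, w | right]. Qed.

Lemma incid_copy F G b w : incid F G (copy b w) = incid (copyF F b) (copyG F b) w.
Proof.
have sum_new (T : finType) (p : pred T) (f : T -> pV A') :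
    (forall t, new_vertex (f t)) -> \sum_t (p t && (f t == copy b w)) = 0.
  move=> newf; apply: big1 => t _; case: eqP => [ft|]; last by rewrite andbF.
  by have := newf t; rewrite ft (negbTE (copy_not_new _ _)).
have sum_false (T : finType) (p : pred T) : \sum_t (p t && false) = 0.
  by apply: big1 => t _; rewrite andbF.
rewrite /incid !card_set_sum /= !big_sumType /= !sum_pair !big_bool /=.
rewrite !(sum_new _ _ _ xof_new) (sum_new _ _ _ datt_new).
rewrite (sum_new _ _ _ pathedge1_new) (sum_new _ _ _ pathedge2_new).
by case: b {sum_new} => /=; rewrite !sum_false !addn0 !add0n -addnA [X in _ + X]addnC addnA;
  congr (_ + _ + _); apply: eq_bigr => x _; rewrite inE.
Qed.

Lemma incid_new F G k :
  incid F G (inr k) = \sum_b \sum_i ((link b i \in F) && (xof A i == inr k))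
    + \sum_j ((path_edge j \in F) && ((pathedge A j).1 == inr k))
    + \sum_j ((path_edge j \in F) && ((pathedge A j).2 == inr k))
    + \sum_i ((i \in G) && (datt A i == inr k)).
Proof.
have n0 (T : finType) (p : pred T) (f : T -> pV A + pV A) :
    \sum_t (p t && (inl (f t) == inr k :> pV A')) = 0.
  by apply: big1 => t _; rewrite andbF.
rewrite /incid !card_set_sum /= !big_sumType /= !sum_pair !big_bool /= !n0.
by rewrite !add0n addnCA addnA.
Qed.

Local Ltac incid_new_vertex :=
  rewrite incid_new big_bool !sum_ord2 !sum_ord3 /= /xof /datt /=;
  rewrite -sum_eqE /= -!val_eqE /= !andbT !andbF; lia.

Lemma incid_x1 F G :
  incid F G (vx1 A) = (link false i0 \in F) + (link true i0 \in F) + (path_edge x1y1 \in F).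
Proof. incid_new_vertex. Qed.

Lemma incid_x2 F G :
  incid F G (vx2 A) = (link false i1 \in F) + (link true i1 \in F) + (path_edge y2x2 \in F).
Proof. incid_new_vertex. Qed.

Lemma incid_y1 F G :
  incid F G (vy1 A) = (path_edge x1y1 \in F) + (path_edge y1y2 \in F) + (i0 \in G).
Proof. incid_new_vertex. Qed.

Lemma incid_y2 F G :
  incid F G (vy2 A) = (path_edge y1y2 \in F) + (path_edge y2x2 \in F) + (i1 \in G).
Proof. incid_new_vertex. Qed.

Definition new_isolated F G : nat :=
  (incid F G (vx1 A) == 0) + (incid F G (vx2 A) == 0)
  + (incid F G (vy1 A) == 0) + (incid F G (vy2 A) == 0).

Lemma card_isolated_doubled F G :
  #|isolated F G| = #|isolated (copyF F false) (copyG F false)|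
                    + #|isolated (copyF F true) (copyG F true)| + new_isolated F G.
Proof.
rewrite /isolated !card_set_sum !big_sumType /= sum_ord4 !addnA.
by congr (_ + _ + _ + _ + _ + _); apply: eq_bigr => v _;
  [rewrite (incid_copy F G false) | rewrite (incid_copy F G true)].
Qed.

Lemma copy_inj b : injective (@copy A b).
Proof. by case: b => v w [->]. Qed.

Lemma mem_imset_copy b b' (C : {set pV A}) w :
  (copy b' w \in copy b @: C) = (b' == b) && (w \in C).
Proof.
apply/imsetP/andP => [[u uC]|[/eqP-> wC]]; last by exists w.
by case: b b' => -[] //= [->]; rewrite eqxx.
Qed.

Lemma new_notin_imset_copy b (C : {set pV A}) u : new_vertex u -> u \notin copy b @: C.
Proof. by move=> hu; apply/imsetP => -[w _ Eu]; move: hu; rewrite Eu (negbTE (copy_not_new _ _)). Qed.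

Lemma adjF_copy F b x y : adjF (copyF F b) x y -> adjF F (copy b x) (copy b y).
Proof.
case/existsP => e /andP[]; rewrite inE => eF h; apply/existsP; exists (copy_edge b e).
by rewrite eF /=; case/orP: h => /eqP E; case: (b) => /=; rewrite E /= eqxx ?orbT.
Qed.

Lemma compF_copy F b v :
  (forall i, i \in copyG F b -> patt A i \notin compF (copyF F b) v) ->
  copy b @: compF (copyF F b) v = compF F (copy b v).
Proof.
move=> hG; apply/setP => z; apply/idP/idP.
  by case/imsetP => w; rewrite !inE => vw ->; apply: (homo_connect (@adjF_copy F b)).
rewrite inE => vz; set S := copy b @: _.
have closedS : closed (adjF F) S.
  apply: closed_adjF => -[[e|e]|[[b' i]|j]] eF /=.
  - rewrite !(mem_imset_copy b false); case: eqP => //= <-.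
    by apply: compF_adjF; apply: adjF_ends; rewrite inE.
  - rewrite !(mem_imset_copy b true); case: eqP => //= <-.
    by apply: compF_adjF; apply: adjF_ends; rewrite inE.
  - rewrite mem_imset_copy (negbTE (new_notin_imset_copy _ _ (xof_new i))).
    by case: eqP => //= Eb; subst b'; apply/negbTE; apply: hG; rewrite inE.
  - by rewrite !(negbTE (new_notin_imset_copy _ _ (pathedge1_new j)))
      (negbTE (new_notin_imset_copy _ _ (pathedge2_new j))).
by rewrite -(closed_connect closedS vz) mem_imset_copy eqxx compF_id.
Qed.

Definition copy_circuits F b : {set {set pV A'}} :=
  [set copy b @: (C : {set pV A}) | C in circuits (copyF F b) (copyG F b)].

Definition new_circuits F G : {set {set pV A'}} :=
  [set C in circuits F G | [exists u in C, new_vertex u]].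

Lemma copy_circuits_sub F G b : copy_circuits F b \subset circuits F G.
Proof.
apply/subsetP => _ /imsetP[C /circuitsP[v hv [-> hG]] ->].
rewrite compF_copy // -(incid_copy F G) in hv *.
apply: compF_in_circuits hv _ => d _.
by rewrite -compF_copy //; apply: new_notin_imset_copy; apply: (datt_new d).
Qed.

Lemma old_circuit_in_copy F G C :
  C \in circuits F G -> ~~ [exists u in C, new_vertex u] ->
  exists b, C \in copy_circuits F b.
Proof.
move=> /circuitsP[u hu [EC _]] oldC.
have old_inC x : x \in C -> ~~ new_vertex x.
  by move=> xC; apply: contra oldC => hx; apply/existsP; exists x; rewrite xC.
case: (doubled_vertexP u) => [[b [w Eu]]|]; last first.
  by move=> newu; have := old_inC u; rewrite EC compF_id newu => /(_ isT).
subst u; exists b.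
have hG i : i \in copyG F b -> patt A i \notin compF (copyF F b) w.
  rewrite inE => linkF; apply/negP => inw.
  have : copy b (patt A i) \in C.
    by rewrite EC inE; apply: (homo_connect (@adjF_copy F b)); rewrite inE in inw.
  rewrite EC (compF_adjF _ (adjF_ends linkF)) -EC => /old_inC.
  by rewrite xof_new.
apply/imsetP; exists (compF (copyF F b) w); last by rewrite compF_copy.
by apply: compF_in_circuits => //; rewrite -(incid_copy F G).
Qed.

Lemma circuits_doubled F G :
  circuits F G = copy_circuits F false :|: copy_circuits F true :|: new_circuits F G.
Proof.
apply/setP => C; apply/idP/idP => [Ccirc|].
  case: (boolP [exists u in C, new_vertex u]) => newC.
    by rewrite !in_setU [C \in new_circuits _ _]inE Ccirc newC orbT.
  by case: (old_circuit_in_copy Ccirc newC) => -[] CF; rewrite !in_setU CF ?orbT.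
case/setUP => [/setUP[]|]; try by apply/subsetP/copy_circuits_sub.
by rewrite inE => /andP[].
Qed.

Lemma card_copy_circuits F b :
  #|copy_circuits F b| = #|circuits (copyF F b) (copyG F b)|.
Proof. by rewrite card_imset //; apply: imset_inj; apply: copy_inj. Qed.

Lemma card_circuits_doubled F G :
  #|circuits F G| = #|circuits (copyF F false) (copyG F false)|
                    + #|circuits (copyF F true) (copyG F true)| + #|new_circuits F G|.
Proof.
have disj_copies : copy_circuits F false :&: copy_circuits F true = set0.
  apply/eqP/set0Pn => -[_ /setIP[/imsetP[C1 C1circ ->] /imsetP[C2 _ E]]].
  have [v _ [EC1 _]] := circuitsP C1circ.
  have : copy false v \in copy false @: C1 by rewrite imset_f // EC1 compF_id.
  by rewrite E mem_imset_copy.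
have disj_new : (copy_circuits F false :|: copy_circuits F true) :&: new_circuits F G = set0.
  apply/eqP/set0Pn => -[C /setIP[copyC]].
  rewrite inE => /andP[_ /existsP[u /andP[uC newu]]].
  by case/setUP: copyC => /imsetP[C' _ EC]; move: uC;
    rewrite EC (negbTE (new_notin_imset_copy _ _ newu)).
by rewrite circuits_doubled cardsU disj_new cardsU disj_copies cards0 !subn0
  !card_copy_circuits.
Qed.

Lemma excess_doubled F G :
  excess F G = excess (copyF F false) (copyG F false) + excess (copyF F true) (copyG F true)
               + 2 * #|new_circuits F G| + new_isolated F G.
Proof. rewrite /excess card_circuits_doubled card_isolated_doubled; lia. Qed.

Lemma even_factor_copy F G b : even_factor F G -> even_factor (copyF F b) (copyG F b).
Proof. by move=> evF v; rewrite -(incid_copy F G b v); apply: evF. Qed.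

Lemma card_copyG F b : #|copyG F b| = (link b i0 \in F) + (link b i1 \in F).
Proof. by rewrite card_set_sum sum_ord2. Qed.

Lemma new_circuits_gt0 F G v :
  new_vertex v -> compF F v \in circuits F G -> 0 < #|new_circuits F G|.
Proof.
move=> newv vcirc; apply/card_gt0P; exists (compF F v).
by rewrite inE vcirc; apply/existsP; exists v; rewrite compF_id.
Qed.

Lemma closed_y1y2 F : path_edge x1y1 \notin F -> path_edge y2x2 \notin F ->
  closed (adjF F) [set vy1 A; vy2 A].
Proof.
move=> x1y1F y2x2F; apply: closed_adjF => -[[e|e]|[[b i]|j]] eF /=; rewrite ?inE //.
  by case: b {eF}; case: (ord2P i) => ->.
case: (ord3P j) eF => -> eF; first by case/negP: x1y1F.
  by rewrite /= !eqxx ?orbT.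
by case/negP: y2x2F.
Qed.

Section LowerBound.
Variable a : nat.
Hypothesis q0_lb : forall F : {set pE A}, even_factor F set0 -> a + 2 <= excess F set0.
Hypothesis q2_lb : forall (F : {set pE A}) G, even_factor F G -> #|G| = 2 -> a <= excess F G.

Lemma excess_copy_lb F G b : even_factor F G ->
  (link b i0 \in F) = (link b i1 \in F)
  /\ a + 2 * ~~ (link b i0 \in F) <= excess (copyF F b) (copyG F b).
Proof.
move=> /(even_factor_copy b) evFb.
have := even_factor_dangling_even evFb; rewrite card_copyG.
case E0: (link b i0 \in F); case E1: (link b i1 \in F) => //= _; split => //.
  by rewrite addn0; apply: q2_lb; rewrite // card_copyG E0 E1.
have G0 : copyG F b = set0 by apply: cards0_eq; rewrite card_copyG E0 E1.
by rewrite G0 in evFb *; apply: q0_lb.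
Qed.

Local Ltac case_new_edges F :=
  case: (link false i0 \in F); case: (link true i0 \in F);
  case: (path_edge x1y1 \in F); case: (path_edge y1y2 \in F);
  case: (path_edge y2x2 \in F) => /=; lia.

Lemma excess_doubled_lb0 F : even_factor F set0 -> 2 * a + 4 <= excess F set0.
Proof.
move=> evF; rewrite excess_doubled /new_isolated.
have [links0 lb0] := excess_copy_lb false evF.
have [links1 lb1] := excess_copy_lb true evF.
have new_circ v : new_vertex v -> incid F set0 v = 2 -> 0 < #|new_circuits F set0|.
  move=> newv deg2; apply: new_circuits_gt0 newv _.
  by apply: compF_in_circuits deg2 _ => d; rewrite in_set0.
have := new_circ (vx1 A) isT; have := new_circ (vy1 A) isT.
have := evF (vx1 A); have := evF (vx2 A); have := evF (vy1 A); have := evF (vy2 A).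
rewrite !(incid_x1, incid_x2, incid_y1, incid_y2) !in_set0 -links0 -links1.
by move: lb0 lb1; case_new_edges F.
Qed.

Lemma excess_doubled_lb2 F G : even_factor F G -> #|G| = 2 -> 2 * a + 2 <= excess F G.
Proof.
move=> evF /card2_setT GT; subst G.
rewrite excess_doubled /new_isolated.
have [links0 lb0] := excess_copy_lb false evF.
have [links1 lb1] := excess_copy_lb true evF.
have x1_circ : path_edge x1y1 \notin F -> path_edge y2x2 \notin F ->
    incid F setT (vx1 A) = 2 -> 0 < #|new_circuits F setT|.
  move=> x1y1F y2x2F deg2; apply: (@new_circuits_gt0 _ _ (vx1 A)) => //.
  apply: compF_in_circuits deg2 _ => d _; apply/negP; rewrite inE => x1d.
  have := closed_connect (closed_y1y2 x1y1F y2x2F) x1d.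
  by case: (ord2P d) => ->; rewrite !inE.
have := evF (vx1 A); have := evF (vx2 A); have := evF (vy1 A); have := evF (vy2 A).
move: x1_circ; rewrite !(incid_x1, incid_x2, incid_y1, incid_y2) !in_setT -links0 -links1.
by move: lb0 lb1; case_new_edges F.
Qed.

End LowerBound.

Section Gluing.
Variables (F2 F0 : {set pE A}).
Hypotheses (evF2 : even_factor F2 setT) (evF0 : even_factor F0 set0).
Implicit Type path : pred 'I_3.

(* Copy [false] carries F2 and uses both of its links, copy [true] carries F0
   and uses none; [path] selects the edges of the path x1 y1 y2 x2. *)
Definition glued path : {set pE A'} :=
  [set e : pE A' | match e with
                   | inl (inl e0) => e0 \in F2
                   | inl (inr e1) => e1 \in F0
                   | inr (inl (b, _)) => ~~ b
                   | inr (inr j) => path j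
                   end].

Lemma link_glued path b i : (link b i \in glued path) = ~~ b.
Proof. by rewrite inE. Qed.

Lemma path_edge_glued path j : (path_edge j \in glued path) = path j.
Proof. by rewrite inE. Qed.

Lemma copyF_glued path b : copyF (glued path) b = if b then F0 else F2.
Proof. by apply/setP => e; case: b; rewrite !inE. Qed.

Lemma copyG_glued path b : copyG (glued path) b = if b then set0 else setT.
Proof. by apply/setP => i; case: b; rewrite !inE. Qed.

Lemma even_factor_glued path G :
  (forall v, new_vertex v -> incid (glued path) G v = 2) -> even_factor (glued path) G.
Proof.
move=> deg2 v; case: (doubled_vertexP v) => [[b [w ->]]|/deg2->]; last by right.
by rewrite incid_copy copyF_glued copyG_glued; case: b.
Qed.

Lemma adjF_glued path j : path j -> adjF (glued path) (pathedge A j).1 (pathedge A j).2.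
Proof. by rewrite -path_edge_glued; apply: adjF_ends. Qed.

Lemma card_new_circuits_glued_le1 G : #|new_circuits (glued predT) G| <= 1.
Proof.
set F := glued predT.
have x1y1P := @adjF_glued predT x1y1 isT.
have y1y2P := @adjF_glued predT y1y2 isT.
have y2x2P := @adjF_glued predT y2x2 isT.
have y1_new v : new_vertex v -> vy1 A \in compF F v.
  rewrite inE; case/new_vertexP => ->; first exact: connect1.
  - by apply: (connect_trans (connect1 _) (connect1 _)); rewrite adjF_sym; eassumption.
  - exact: connect0.
  - by apply: connect1; rewrite adjF_sym.
apply: (@leq_trans #|[set compF F (vy1 A)]|); last by rewrite cards1.
apply/subset_leq_card/subsetP => C.
rewrite inE => /andP[/circuitsP[v _ [-> _]] /existsP[u /andP[uC newu]]].
by rewrite inE (compF_eq uC) (compF_eq (y1_new u newu)).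
Qed.

Lemma new_circuits_glued_eq0 : #|new_circuits (glued (predC1 y1y2)) setT| = 0.
Proof.
set F := glued (predC1 y1y2).
have x1y1P := @adjF_glued (predC1 y1y2) x1y1 isT.
have y2x2P := @adjF_glued (predC1 y1y2) y2x2 isT.
have y_new v : new_vertex v -> (vy1 A \in compF F v) || (vy2 A \in compF F v).
  rewrite !inE; case/new_vertexP => ->.
  - by rewrite connect1.
  - by rewrite orbC connect1 // adjF_sym.
  - by rewrite connect0.
  - by rewrite connect0 orbT.
apply/eqP; rewrite cards_eq0; apply/eqP/setP => C; rewrite in_set0; apply/negP.
rewrite inE => /andP[/circuitsP[v _ [EC datt_notin]] /existsP[u /andP[uC newu]]].
rewrite EC in uC datt_notin; rewrite (compF_eq uC) in datt_notin.
by case/orP: (y_new u newu) => y_in;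
  [move: (datt_notin i0) | move: (datt_notin i1)]; rewrite in_setT y_in => /(_ isT).
Qed.

Local Ltac eval_glued :=
  rewrite /new_isolated ?(incid_x1, incid_x2, incid_y1, incid_y2)
          !(link_glued, path_edge_glued) ?(in_set0, in_setT) /=.

Lemma even_factor_glued_cycle : even_factor (glued predT) set0.
Proof. by apply: even_factor_glued => v /new_vertexP[] ->; eval_glued. Qed.

Lemma excess_glued_cycle :
  excess (glued predT) set0 <= excess F2 setT + excess F0 set0 + 2.
Proof.
rewrite excess_doubled !copyF_glued !copyG_glued; eval_glued.
by rewrite !add0n addn0 leq_add2l -[X in _ <= X]/(2 * 1) leq_mul2l
  card_new_circuits_glued_le1.
Qed.

Lemma even_factor_glued_path : even_factor (glued (predC1 y1y2)) setT.
Proof. by apply: even_factor_glued => v /new_vertexP[] ->; eval_glued. Qed.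

Lemma excess_glued_path :
  excess (glued (predC1 y1y2)) setT = excess F2 setT + excess F0 set0.
Proof.
by rewrite excess_doubled !copyF_glued !copyG_glued new_circuits_glued_eq0; eval_glued;
  rewrite !addn0.
Qed.

End Gluing.

End Doubled.

Theorem lemma1 (A : pole 2) (a n : nat) :
  cubic_pole A -> t_is A (a + 2) a n ->
  t_is (doubled A) (2 * a + 4) (2 * a + 2) (2 * n + 4).
Proof.
move=> _ [[[F0 [evF0 exF0]] q0_lb] [[F2 [G2 [evF2 [/card2_setT G2T exF2]]]] q2_lb] nA].
subst G2; have lb0 := excess_doubled_lb0 q0_lb q2_lb.
have lb2 := excess_doubled_lb2 q0_lb q2_lb.
split.
- split=> //; exists (glued F2 F0 predT).
  have evF := even_factor_glued_cycle evF2 evF0.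
  split=> //; apply/eqP; rewrite eqn_leq lb0 // andbT.
  apply: leq_trans (excess_glued_cycle F2 F0) _.
  by rewrite exF2 exF0; lia.
- split=> //; exists (glued F2 F0 (predC1 y1y2)), setT.
  have evF := even_factor_glued_path evF2 evF0.
  split=> //; split; first by rewrite cardsT card_ord.
  apply/eqP; rewrite eqn_leq lb2 ?cardsT ?card_ord // andbT.
  by rewrite excess_glued_path exF2 exF0; lia.
- by rewrite /nverts /= !card_sum card_ord -nA addnn -mul2n.
Qed.
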